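(* Let $\mathfrak{M}=(S,\mathcal{L})$ be a Veblenian gamma space all of whose lines have at least $3$ points, and let $\mathcal{H}$ be a flappy hyperplane of $\mathfrak{M}$. Then for all pairwise distinct points $p_1,p_2,p_3\in\mathcal{H}$: $p_1,p_2,p_3$ lie on a common line of $\mathfrak{M}$ if and only if there exist points $a_1,a_2,a_3\in S\setminus\mathcal{H}$ such that for every permutation $(i,j,k)$ of $(1,2,3)$ the points $a_i,a_j$ are distinct and collinear and $p_k$ lies on the line through $a_i$ and $a_j$. Equivalently, in terms of the complement: for lines $L_1,L_2,L_3$ of $\mathfrak{M}$ not contained in $\mathcal{H}$ with pairwise distinct points $L_1^\infty,L_2^\infty,L_3^\infty$, these three points are collinear in $\mathfrak{M}$ if and only if there is a triangle in $\mathfrak{M}\setminus\mathcal{H}$ with sides $K_1,K_2,K_3$ such that $K_i\parallel_\mathcal{H} L_i$ for $i=1,2,3$.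
   Context: A partial linear space is a pair $(S,\mathcal{L})$ of points and lines such that every line has at least two points, every point is on a line, and two distinct lines share at most one point; points are collinear ($a\sim b$) if some line contains both; $[a]_\sim$ is the set of points collinear with $a$. A subspace is a set $X$ such that every line meeting $X$ in at least two points lies in $X$; a hyperplane is a proper subspace meeting every line. A gamma space is a partial linear space where $[a]_\sim$ is a subspace for every point $a$. It is Veblenian if for any two distinct lines $L_1,L_2$ through a point $p$ and any two distinct lines $K_1,K_2$ not through $p$ such that each $K_j$ meets both $L_1,L_2$, the lines $K_1,K_2$ meet. A hyperplane $X$ is flappy if for every line $L\subseteq X$ there is a point $a\notin X$ with $L\subseteq[a]_\sim$. A triangle is a triple of pairwise distinct, pairwise collinear points not on a common line. For a hyperplane $\mathcal{H}$, each line $L\not\subseteq\mathcal{H}$ meets $\mathcal{H}$ in a unique point $L^\infty$; the complement $\mathfrak{M}\setminus\mathcal{H}$ has points $S\setminus\mathcal{H}$, lines $L\setminus\mathcal{H}$ ($L\not\subseteq\mathcal{H}$), and parallelism $L\parallel_\mathcal{H}K$ iff $L^\infty=K^\infty$. *)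

Set Implicit Arguments.
Section Geometry.
Variables (P Ln : Type) (inc : P -> Ln -> Prop).

Definition partial_linear_space : Prop :=
  (forall L : Ln, exists a b : P, a <> b /\ inc a L /\ inc b L) /\
  (forall a : P, exists L : Ln, inc a L) /\
  (forall (L K : Ln) (a b : P), L <> K ->
     inc a L -> inc a K -> inc b L -> inc b K -> a = b).

Definition collinear (a b : P) : Prop := exists L : Ln, inc a L /\ inc b L.

Definition subspace (X : P -> Prop) : Prop :=
  forall (L : Ln) (a b : P), a <> b -> inc a L -> inc b L -> X a -> X b ->
    forall c : P, inc c L -> X c.

Definition line_in (L : Ln) (X : P -> Prop) : Prop :=
  forall x : P, inc x L -> X x.

Definition hyperplane (X : P -> Prop) : Prop :=
  subspace X /\ (exists p : P, ~ X p) /\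
  (forall L : Ln, exists p : P, inc p L /\ X p).

Definition gamma_space : Prop :=
  partial_linear_space /\ forall a : P, subspace (collinear a).

Definition meets (K L : Ln) : Prop := exists x : P, inc x K /\ inc x L.

Definition veblenian : Prop :=
  forall (p : P) (L1 L2 K1 K2 : Ln),
    L1 <> L2 -> inc p L1 -> inc p L2 ->
    K1 <> K2 -> ~ inc p K1 -> ~ inc p K2 ->
    meets K1 L1 -> meets K1 L2 -> meets K2 L1 -> meets K2 L2 ->
    meets K1 K2.

Definition lines_thick : Prop :=
  forall L : Ln, exists a b c : P,
    a <> b /\ a <> c /\ b <> c /\ inc a L /\ inc b L /\ inc c L.

Definition flappy (X : P -> Prop) : Prop :=
  hyperplane X /\
  forall L : Ln, line_in L X ->
    exists a : P, ~ X a /\ forall x : P, inc x L -> collinear a x.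

(* p = L^oo w.r.t. H, meaningful when L is not contained in H *)
Definition at_infinity (H : P -> Prop) (L : Ln) (p : P) : Prop :=
  inc p L /\ H p.

Definition parallel_H (H : P -> Prop) (L K : Ln) : Prop :=
  exists p : P, at_infinity H L p /\ at_infinity H K p.

(* a triangle of M \ H with sides (lines of M not contained in H) K1 K2 K3:
   vertices b1 b2 b3 off H, pairwise distinct, not on a common line,
   K1 = b2b3, K2 = b1b3, K3 = b1b2. *)
Definition triangle_sides (H : P -> Prop) (K1 K2 K3 : Ln) : Prop :=
  ~ line_in K1 H /\ ~ line_in K2 H /\ ~ line_in K3 H /\
  exists b1 b2 b3 : P,
    ~ H b1 /\ ~ H b2 /\ ~ H b3 /\
    b1 <> b2 /\ b1 <> b3 /\ b2 <> b3 /\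
    inc b2 K1 /\ inc b3 K1 /\ inc b1 K2 /\ inc b3 K2 /\
    inc b1 K3 /\ inc b2 K3 /\
    ~ (exists L : Ln, inc b1 L /\ inc b2 L /\ inc b3 L).

End Geometry.

(** If p_1, p_2, p_3 lie on a line L, then L lies in H, and flappiness gives a
    point a off H collinear with all of L.  A third point a_2 of the line
    a p_3 is collinear with p_1 by the gamma property, and the Veblen
    condition at p_3 makes the line a_2 p_1 meet the line a p_2 in a point
    off H: the triangle.  Conversely, for a triangle a_1 a_2 a_3 off H, the
    gamma property makes p_2 and p_3 collinear, and the Veblen condition at
    a_1 makes the line p_2 p_3, which lies in H, meet the side a_2 a_3; that
    side meets H only in p_1.  The statement about parallel classes is the
    same one, read through the points at infinity. *)

From Stdlib Require Import Classical.
Set Implicit Arguments.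

Section IncidenceGeometry.

Variables (P Ln : Type) (inc : P -> Ln -> Prop).

Lemma line_through_two_points_unique :
  partial_linear_space inc -> forall (L K : Ln) (a b : P), a <> b ->
  inc a L -> inc b L -> inc a K -> inc b K -> L = K.
Proof.
  intros [_ [_ hmeet]] L K a b hab haL hbL haK hbK.
  destruct (classic (L = K)) as [e | n]; [exact e |].
  contradiction (hab (hmeet L K a b n haL haK hbL hbK)).
Qed.

Lemma collinear_sym (a b : P) : collinear inc a b -> collinear inc b a.
Proof. intros [L [haL hbL]]. exists L; auto. Qed.

Lemma subspace_line_in (X : P -> Prop) (L : Ln) (a b : P) :
  subspace inc X -> a <> b -> inc a L -> inc b L -> X a -> X b ->
  line_in inc L X.
Proof. intros hX hab haL hbL hXa hXb x hx. exact (hX L a b hab haL hbL hXa hXb x hx). Qed.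

Lemma subspace_meet_line_unique (X : P -> Prop) (L : Ln) (p q : P) :
  subspace inc X -> ~ line_in inc L X ->
  inc p L -> inc q L -> X p -> X q -> p = q.
Proof.
  intros hX hL hpL hqL hXp hXq.
  destruct (classic (p = q)) as [e | n]; [exact e |].
  contradiction (hL (subspace_line_in hX n hpL hqL hXp hXq)).
Qed.

Lemma thick_line_third_point :
  lines_thick inc -> forall (L : Ln) (u v : P),
  exists w, inc w L /\ w <> u /\ w <> v.
Proof.
  intros hthick L u v.
  destruct (hthick L) as [x [y [z [hxy [hxz [hyz [hx [hy hz]]]]]]]].
  destruct (classic (x = u)), (classic (x = v)),
           (classic (y = u)), (classic (y = v)); subst;
  first [ exists x; tauto | exists y; tauto
        | exists z; split; [ | split; intro; subst]; auto ].
Qed.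

Lemma gamma_collinear_line :
  gamma_space inc -> forall (u : P) (M : Ln) (a b c : P), a <> b ->
  inc a M -> inc b M -> collinear inc u a -> collinear inc u b -> inc c M ->
  collinear inc u c.
Proof.
  intros [_ hgamma] u M a b c hab haM hbM hua hub hcM.
  exact (hgamma u M a b hab haM hbM hua hub c hcM).
Qed.

Definition triangle_off_through (H : P -> Prop) (p1 p2 p3 : P) : Prop :=
  exists a1 a2 a3 : P, ~ H a1 /\ ~ H a2 /\ ~ H a3 /\
    (a1 <> a2 /\ exists L : Ln, inc a1 L /\ inc a2 L /\ inc p3 L) /\
    (a1 <> a3 /\ exists L : Ln, inc a1 L /\ inc a3 L /\ inc p2 L) /\
    (a2 <> a3 /\ exists L : Ln, inc a2 L /\ inc a3 L /\ inc p1 L).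

Section Hyperplane.

Variable H : P -> Prop.
Hypotheses (hgamma : gamma_space inc) (hveb : veblenian inc)
           (hsub : subspace inc H).

Let hpls : partial_linear_space inc := proj1 hgamma.

Lemma collinear_of_triangle_off (p1 p2 p3 : P) :
  H p1 -> H p2 -> H p3 -> p1 <> p3 -> p2 <> p3 ->
  triangle_off_through H p1 p2 p3 ->
  exists L : Ln, inc p1 L /\ inc p2 L /\ inc p3 L.
Proof.
  intros h1 h2 h3 d13 d23
    [a1 [a2 [a3 [ha1 [ha2 [ha3 [[e12 [M3 [a1M3 [a2M3 p3M3]]]]
      [[e13 [M2 [a1M2 [a3M2 p2M2]]]] [_ [M1 [a2M1 [a3M1 p1M1]]]]]]]]]]]].
  assert (a2p2 : collinear inc a2 p2).
  { apply (gamma_collinear_line hgamma e13 a1M2 a3M2); auto.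
    - exists M3; auto.
    - exists M1; auto. }
  assert (p2p3 : collinear inc p2 p3).
  { apply (gamma_collinear_line hgamma e12 a1M3 a2M3); auto.
    - exists M2; auto.
    - exact (collinear_sym a2p2). }
  destruct p2p3 as [D [p2D p3D]].
  assert (DH : line_in inc D H) by exact (subspace_line_in hsub d23 p2D p3D h2 h3).
  assert (a1M1 : ~ inc a1 M1).
  { intro a1M1.
    rewrite (line_through_two_points_unique hpls e12 a1M1 a2M1 a1M3 a2M3) in p1M1.
    exact (ha1 (hsub d13 p1M1 p3M3 h1 h3 a1M3)). }
  destruct (hveb (p := a1) (L1 := M2) (L2 := M3) (K1 := M1) (K2 := D)) as [x [xM1 xD]]; auto.
  - intro e; subst M3. exact (ha1 (hsub d23 p2M2 p3M3 h2 h3 a1M2)).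
  - intro e; subst D. exact (ha2 (DH a2 a2M1)).
  - exists a3; auto.
  - exists a2; auto.
  - exists p2; auto.
  - exists p3; auto.
  - replace p1 with x; [exists D; auto |].
    apply (subspace_meet_line_unique hsub (L := M1)); auto.
Qed.

Lemma triangle_off_of_collinear (p1 p2 p3 : P) :
  lines_thick inc -> flappy inc H ->
  H p1 -> H p2 -> H p3 -> p1 <> p2 -> p1 <> p3 -> p2 <> p3 ->
  (exists L : Ln, inc p1 L /\ inc p2 L /\ inc p3 L) ->
  triangle_off_through H p1 p2 p3.
Proof.
  intros hthick [_ hflap] h1 h2 h3 d12 d13 d23 [L [p1L [p2L p3L]]].
  assert (LH : line_in inc L H) by exact (subspace_line_in hsub d12 p1L p2L h1 h2).
  destruct (hflap L LH) as [a [ha a_L]].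
  destruct (a_L p3 p3L) as [M3 [aM3 p3M3]].
  destruct (a_L p2 p2L) as [M2 [aM2 p2M2]].
  assert (ap3 : a <> p3) by (intro; subst; auto).
  destruct (thick_line_third_point hthick M3 a p3) as [a2 [a2M3 [a2a a2p3]]].
  assert (ha2 : ~ H a2).
  { intro e. exact (ha (hsub (not_eq_sym a2p3) p3M3 a2M3 h3 e aM3)). }
  assert (p1a2 : collinear inc p1 a2).
  { apply (gamma_collinear_line hgamma ap3 aM3 p3M3); auto.
    - exact (collinear_sym (a_L p1 p1L)).
    - exists L; auto. }
  destruct p1a2 as [N [p1N a2N]].
  destruct (hveb (p := p3) (L1 := L) (L2 := M3) (K1 := N) (K2 := M2)) as [x [xN xM2]]; auto.
  - intro e; subst M3. exact (ha (LH a aM3)).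
  - intro e; subst N. exact (ha (hsub d12 p1N p2M2 h1 h2 aM2)).
  - intro p3N. exact (ha2 (hsub d13 p1N p3N h1 h3 a2N)).
  - intro p3M2. exact (ha (hsub d23 p2M2 p3M2 h2 h3 aM2)).
  - exists p1; auto.
  - exists a2; auto.
  - exists p2; auto.
  - exists a; auto.
  - assert (hx : ~ H x).
    { intro hx. destruct (classic (x = p2)) as [e | n].
      - subst x. exact (ha2 (hsub d12 p1N xN h1 h2 a2N)).
      - exact (ha (hsub n xM2 p2M2 hx h2 aM2)). }
    exists a, a2, x. repeat split; auto.
    + exists M3; auto.
    + intro e; subst x.
      rewrite (line_through_two_points_unique hpls a2a a2N xN a2M3 aM3) in p1N.
      exact (ha (hsub d13 p1N p3M3 h1 h3 aM3)).
    + exists M2; auto.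
    + intro e; subst x.
      rewrite (line_through_two_points_unique hpls (not_eq_sym a2a) aM2 xM2 aM3 a2M3)
        in p2M2.
      exact (ha (hsub d23 p2M2 p3M3 h2 h3 aM3)).
    + exists N; auto.
Qed.

Lemma at_infinity_unique (L : Ln) (p q : P) :
  ~ line_in inc L H -> at_infinity inc H L p -> at_infinity inc H L q -> p = q.
Proof. intros hL [pL hp] [qL hq]. exact (subspace_meet_line_unique hsub hL pL qL hp hq). Qed.

Lemma parallel_at_infinity (K L : Ln) (p : P) :
  ~ line_in inc L H -> at_infinity inc H L p -> parallel_H inc H K L ->
  at_infinity inc H K p.
Proof.
  intros hL hp [q [hqK hqL]].
  rewrite (at_infinity_unique hL hp hqL). exact hqK.
Qed.

Lemma triangle_sides_of_triangle_off (p1 p2 p3 : P) :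
  H p1 -> H p2 -> H p3 -> p2 <> p3 -> triangle_off_through H p1 p2 p3 ->
  exists K1 K2 K3 : Ln, triangle_sides inc H K1 K2 K3 /\
    at_infinity inc H K1 p1 /\ at_infinity inc H K2 p2 /\ at_infinity inc H K3 p3.
Proof.
  intros h1 h2 h3 d23
    [a1 [a2 [a3 [ha1 [ha2 [ha3 [[e12 [M3 [a1M3 [a2M3 p3M3]]]]
      [[e13 [M2 [a1M2 [a3M2 p2M2]]]] [e23 [M1 [a2M1 [a3M1 p1M1]]]]]]]]]]]].
  exists M1, M2, M3. repeat split; auto.
  exists a1, a2, a3. repeat split; auto.
  intros [L [a1L [a2L a3L]]].
  rewrite (line_through_two_points_unique hpls e12 a1L a2L a1M3 a2M3) in a3L.
  rewrite (line_through_two_points_unique hpls e13 a1M3 a3L a1M2 a3M2) in p3M3.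
  exact (ha1 (hsub d23 p2M2 p3M3 h2 h3 a1M2)).
Qed.

Lemma triangle_off_of_triangle_sides (K1 K2 K3 : Ln) (p1 p2 p3 : P) :
  triangle_sides inc H K1 K2 K3 ->
  at_infinity inc H K1 p1 -> at_infinity inc H K2 p2 -> at_infinity inc H K3 p3 ->
  triangle_off_through H p1 p2 p3.
Proof.
  intros [_ [_ [_ [b1 [b2 [b3 [hb1 [hb2 [hb3 [e12 [e13 [e23
    [b2K1 [b3K1 [b1K2 [b3K2 [b1K3 [b2K3 _]]]]]]]]]]]]]]]]]] [p1K1 _] [p2K2 _] [p3K3 _].
  exists b1, b2, b3. repeat split; auto.
  - exists K3; auto.
  - exists K2; auto.
  - exists K1; auto.
Qed.

Lemma collinear_iff_triangle_off (p1 p2 p3 : P) :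
  lines_thick inc -> flappy inc H ->
  H p1 -> H p2 -> H p3 -> p1 <> p2 -> p1 <> p3 -> p2 <> p3 ->
  (exists L : Ln, inc p1 L /\ inc p2 L /\ inc p3 L) <->
  triangle_off_through H p1 p2 p3.
Proof.
  intros hthick hflap h1 h2 h3 d12 d13 d23. split.
  - exact (triangle_off_of_collinear hthick hflap h1 h2 h3 d12 d13 d23).
  - exact (collinear_of_triangle_off h1 h2 h3 d13 d23).
Qed.

End Hyperplane.

End IncidenceGeometry.

Theorem proposition2p5 (P Ln : Type) (inc : P -> Ln -> Prop) (H : P -> Prop) :
  gamma_space inc -> veblenian inc -> lines_thick inc -> flappy inc H ->
  (forall p1 p2 p3 : P,
     H p1 -> H p2 -> H p3 -> p1 <> p2 -> p1 <> p3 -> p2 <> p3 ->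
     ((exists L : Ln, inc p1 L /\ inc p2 L /\ inc p3 L) <->
      (exists a1 a2 a3 : P, ~ H a1 /\ ~ H a2 /\ ~ H a3 /\
         (a1 <> a2 /\ exists L : Ln, inc a1 L /\ inc a2 L /\ inc p3 L) /\
         (a1 <> a3 /\ exists L : Ln, inc a1 L /\ inc a3 L /\ inc p2 L) /\
         (a2 <> a3 /\ exists L : Ln, inc a2 L /\ inc a3 L /\ inc p1 L)))) /\
  (forall (L1 L2 L3 : Ln) (p1 p2 p3 : P),
     ~ line_in inc L1 H -> ~ line_in inc L2 H -> ~ line_in inc L3 H ->
     at_infinity inc H L1 p1 -> at_infinity inc H L2 p2 -> at_infinity inc H L3 p3 ->
     p1 <> p2 -> p1 <> p3 -> p2 <> p3 ->
     ((exists L : Ln, inc p1 L /\ inc p2 L /\ inc p3 L) <->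
      (exists K1 K2 K3 : Ln, triangle_sides inc H K1 K2 K3 /\
         parallel_H inc H K1 L1 /\ parallel_H inc H K2 L2 /\
         parallel_H inc H K3 L3))).
Proof.
  intros hgamma hveb hthick hflap.
  pose proof (proj1 (proj1 hflap)) as hsub.
  split.
  - intros p1 p2 p3 h1 h2 h3 d12 d13 d23.
    exact (collinear_iff_triangle_off hgamma hveb hsub hthick hflap h1 h2 h3 d12 d13 d23).
  - intros L1 L2 L3 p1 p2 p3 n1 n2 n3 i1 i2 i3 d12 d13 d23.
    pose proof i1 as [_ h1]. pose proof i2 as [_ h2]. pose proof i3 as [_ h3].
    rewrite (collinear_iff_triangle_off hgamma hveb hsub hthick hflap h1 h2 h3 d12 d13 d23).
    split.
    + intro htri.
      destruct (triangle_sides_of_triangle_off hgamma hsub h1 h2 h3 d23 htri)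
        as [K1 [K2 [K3 [hsides [k1 [k2 k3]]]]]].
      exists K1, K2, K3.
      split; [exact hsides | split; [| split]];
        [exists p1 | exists p2 | exists p3]; split; assumption.
    + intros [K1 [K2 [K3 [hsides [par1 [par2 par3]]]]]].
      exact (triangle_off_of_triangle_sides hsides (parallel_at_infinity hsub n1 i1 par1)
        (parallel_at_infinity hsub n2 i2 par2) (parallel_at_infinity hsub n3 i3 par3)).
Qed.
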